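(* Let $\mathcal{G}$ be a class of graphs that is closed under removing edges (if $G\in\mathcal{G}$, then every graph obtained from $G$ by deleting edges, keeping all vertices, is in $\mathcal{G}$). Let $c$ be a constant, let $f(x)=cx$, and let $g$ be an arbitrary function. Suppose that every graph $G\in\mathcal{G}$ with $n$ vertices and $m$ edges satisfies $cr(G)\geq f(m)-g(n)$. Then for every positive integer $k$, every graph $G\in\mathcal{G}$ with $n$ vertices and $m$ edges satisfies $$cr_k(G)\geq f(m)-k\cdot g(n).$$
   Context: $cr(G)$ denotes the minimum number of edge crossings over all (simple) drawings of $G$ in the plane, where in a simple drawing no two edges cross more than once and no three edges cross at a point. For a positive integer $k$, the $k$-planar crossing number $cr_k(G)$ of $G=(V,E)$ is the minimum of $cr(G_1)+\cdots+cr(G_k)$ over all decompositions of $G$ into $k$ subgraphs $G_i=(V,E_i)$ with $E=E_1\cup\dots\cup E_k$ and the $E_i$ pairwise disjoint. *)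

From HB Require Import structures.
From mathcomp Require Import all_boot all_order all_algebra.
From mathcomp Require Import all_classical all_reals all_analysis.
From mathcomp Require Import Rstruct Rstruct_topology.
Set Implicit Arguments. Unset Strict Implicit. Unset Printing Implicit Defensive.
Import Order.TTheory GRing.Theory Num.Theory.
Local Open Scope classical_set_scope.
Local Open Scope ring_scope.

Notation RR := Rdefinitions.R.
Definition point := (RR * RR)%type.

Definition is_graph n (E : {set {set 'I_n}}) : Prop :=
  forall e, e \in E -> #|e| = 2%N.

(* A drawing: positions of vertices and, for each potential edge, a curve
   parametrized by [0,1]. *)
Record drawing (n : nat) := Drawing {
  dpos : 'I_n -> point;
  darc : {set 'I_n} -> RR -> point }.

Definition arc_int n (D : drawing n) (e : {set 'I_n}) : set point :=
  [set p | exists t : RR, (0 < t < 1) /\ darc D e t = p].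

Definition is_drawing n (E : {set {set 'I_n}}) (D : drawing n) : Prop :=
  injective (dpos D) /\
  forall e, e \in E ->
    [/\ {within `[0%R, 1%R], continuous (darc D e)},
        (forall s t : RR, 0 <= s <= 1 -> 0 <= t <= 1 ->
            darc D e s = darc D e t -> s = t),
        (exists u v, e = (u |: [set v])%SET /\ darc D e 0 = dpos D u /\
                     darc D e 1 = dpos D v) &
        (forall (t : RR) w, 0 < t < 1 -> darc D e t <> dpos D w)].

Definition crosses n (D : drawing n) (e f : {set 'I_n}) : Prop :=
  arc_int D e `&` arc_int D f !=set0.

Definition is_simple n (E : {set {set 'I_n}}) (D : drawing n) : Prop :=
  (forall e f, e \in E -> f \in E -> e != f ->
     forall p q, (arc_int D e `&` arc_int D f) p ->
                 (arc_int D e `&` arc_int D f) q -> p = q) /\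
  (forall e f h, e \in E -> f \in E -> h \in E ->
     e != f -> f != h -> e != h ->
     arc_int D e `&` arc_int D f `&` arc_int D h = set0).

(* number of crossings of a simple drawing = number of unordered pairs of
   distinct edges that cross (each such pair crosses exactly once) *)
Definition ncross n (E : {set {set 'I_n}}) (D : drawing n) : nat :=
  (#|finset (fun ef : {set 'I_n} * {set 'I_n} =>
      [&& ef.1 \in E, ef.2 \in E, ef.1 != ef.2 & `[< crosses D ef.1 ef.2 >]])|
   %/ 2)%N.

Definition cr_achieves n (E : {set {set 'I_n}}) (m : nat) : Prop :=
  exists D : drawing n, [/\ is_drawing E D, is_simple E D & ncross E D = m].

(* cr(G): minimum number of crossings over all simple drawings
   (0 by convention if there were no drawing, which never happens). *)
Definition cr n (E : {set {set 'I_n}}) : nat :=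
  match pselect (exists m, `[< cr_achieves E m >]) with
  | left H => ex_minn H
  | right _ => 0%N
  end.

Local Close Scope classical_set_scope.

Definition is_decomp n k (E : {set {set 'I_n}}) (F : 'I_k -> {set {set 'I_n}})
  : Prop :=
  (forall i j, i != j -> [disjoint F i & F j]) /\
  \bigcup_(i < k) F i = E.

Definition crk_achieves n k (E : {set {set 'I_n}}) (m : nat) : Prop :=
  exists F : 'I_k -> {set {set 'I_n}},
    is_decomp E F /\ (\sum_(i < k) cr (F i))%N = m.

Definition crk n (k : nat) (E : {set {set 'I_n}}) : nat :=
  match pselect (exists m, `[< crk_achieves k E m >]) with
  | left H => ex_minn H
  | right _ => 0%N
  end.

From HB Require Import structures.
From mathcomp Require Import all_boot all_order all_algebra.
From mathcomp Require Import all_classical all_reals all_analysis.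
From mathcomp Require Import Rstruct Rstruct_topology.
Import Order.TTheory GRing.Theory Num.Theory.
Local Open Scope ring_scope.

(* Take a decomposition E = E_1 u ... u E_k realising cr_k(E).  Each E_i is in
   the class, so cr(E_i) >= c |E_i| - g(n); summing over i, and using that the
   E_i are disjoint so that their sizes add up to |E|, gives the bound. *)

Section Decomposition.

Context {n k : nat}.

Lemma decomp_single (E : {set {set 'I_n}}) (i0 : 'I_k) :
  is_decomp E (fun i => if i == i0 then E else finset.set0).
Proof.
split.
  move=> i j; rewrite -setI_eq0.
  by case: (i =P i0) => [-> | _]; case: (j =P i0) => [-> | _];
    rewrite ?eqxx ?finset.setI0 ?finset.set0I.
apply/finset.setP => x; apply/finset.bigcupP/idP => [[i _] | xE].
  by case: eqP => // _; rewrite inE.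
by exists i0 => //; rewrite eqxx.
Qed.

Lemma crk_spec (E : {set {set 'I_n}}) : (0 < k)%N ->
  exists2 F : 'I_k -> {set {set 'I_n}},
    is_decomp E F & crk k E = (\sum_(i < k) cr (F i))%N.
Proof.
move=> k_gt0; rewrite /crk; case: pselect => [H | []]; last first.
  pose F i := if i == Ordinal k_gt0 then E else finset.set0.
  exists (\sum_(i < k) cr (F i))%N; apply/asboolP.
  by exists F; split => //; apply: decomp_single.
by case: ex_minnP => m /asboolP [F [decF <-]] _; exists F.
Qed.

Context {E : {set {set 'I_n}}} {F : 'I_k -> {set {set 'I_n}}}.
Hypothesis decF : is_decomp E F.

Lemma decomp_sub i : F i \subset E.
Proof. by case: decF => _ <-; apply: (finset.bigcup_sup i). Qed.

Lemma card_decomp : #|E| = (\sum_(i < k) #|F i|)%N.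
Proof.
case: decF => disjF <-; rewrite -sum1_card (partition_disjoint_bigcup _ _ disjF).
by apply: eq_bigr => i _; rewrite sum1_card.
Qed.

End Decomposition.

Theorem lemma2
  (Cls : forall n : nat, {set {set 'I_n}} -> Prop)
  (Cls_closed : forall n (E E' : {set {set 'I_n}}),
      Cls n E -> E' \subset E -> Cls n E')
  (c : RR) (g : nat -> RR)
  (Hcr : forall n (E : {set {set 'I_n}}), Cls n E -> is_graph E ->
      (cr E)%:R >= c * (#|E|)%:R - g n)
  (k : nat) (hk : (0 < k)%N) :
  forall n (E : {set {set 'I_n}}), Cls n E -> is_graph E ->
    (crk k E)%:R >= c * (#|E|)%:R - k%:R * g n.
Proof.
move=> n E HE gE; have [F decF ->] := crk_spec E hk.
rewrite (card_decomp decF) !natr_sum mulr_sumr.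
have -> : k%:R * g n = \sum_(i < k) g n by rewrite sumr_const card_ord mulr_natl.
rewrite -sumrB; apply: ler_sum => i _; apply: Hcr.
  exact: Cls_closed HE (decomp_sub decF i).
by move=> e /(fintype.subsetP (decomp_sub decF i)); apply: gE.
Qed.
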